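(* Let $M$ be an $n$-dimensional manifold with local coordinates $(u^1,\dots,u^m,v^{m+1},\dots,v^n)$, and let $L$ be an affinor on $M$ with zero Nijenhuis torsion which in these coordinates has the form $L=\begin{pmatrix}A(\mathbf u)&0\\0&B(\mathbf v)\end{pmatrix}$, where $A$ is $m\times m$ depending only on $\mathbf u=(u^1,\dots,u^m)$, $B$ depends only on $\mathbf v=(v^{m+1},\dots,v^n)$, and $\mathrm{Spec}(A)\cap\mathrm{Spec}(B)=\emptyset$. Let $g$ and $\tilde g$ be non-degenerate symmetric bivectors with $\tilde g^{ij}=L^j_kg^{ki}$, written in block form $g=\begin{pmatrix}\sigma&0\\0&\eta\end{pmatrix}$, $\tilde g=\begin{pmatrix}\tilde\sigma&0\\0&\tilde\eta\end{pmatrix}$. If the Killing condition $\nabla^i\tilde g^{kj}+\nabla^k\tilde g^{ij}+\nabla^j\tilde g^{ik}=0$ holds, then $\sigma,\tilde\sigma$ depend only on $\mathbf u$ and $\eta,\tilde\eta$ depend only on $\mathbf v$.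
   Context: $\nabla$ is the Levi-Civita connection of $g$ and $\nabla^i=g^{is}\nabla_s$. The Nijenhuis torsion of $L$ is $\mathcal N^k_{ij}=L^s_i\partial_sL^k_j-L^s_j\partial_sL^k_i+L^k_s\partial_jL^s_i-L^k_s\partial_iL^s_j$. *)

From HB Require Import structures.
From mathcomp Require Import all_boot all_order all_algebra.
From mathcomp Require Import all_classical all_reals all_analysis.
From mathcomp Require Import complex.
Set Implicit Arguments. Unset Strict Implicit. Unset Printing Implicit Defensive.
Import Order.TTheory GRing.Theory Num.Theory.
Import numFieldNormedType.Exports.
Local Open Scope classical_set_scope.
Local Open Scope ring_scope.

Section Defs.
Variable R : realType.
Variable N : nat.
Notation pt := 'rV[R]_N.

Definition coordv (s : 'I_N) : pt := delta_mx 0 s.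

Definition pd (s : 'I_N) (f : pt -> R) (x : pt) : R := 'D_(coordv s) f x.

Definition pds (l : seq 'I_N) (f : pt -> R) : pt -> R :=
  foldr (fun s h => pd s h) f l.

Definition smooth_on (U : set pt) (f : pt -> R) : Prop :=
  forall (l : seq 'I_N) (s : 'I_N) (x : pt), U x -> derivable (pds l f) x (coordv s).

(* Nijenhuis torsion of the (1,1)-tensor L, L x k j = L^k_j at x *)
Definition nijenhuis (L : pt -> 'M[R]_N) (k i j : 'I_N) (x : pt) : R :=
  \sum_(s < N) ( L x s i * pd s (fun y => L y k j) x
               - L x s j * pd s (fun y => L y k i) x
               + L x k s * pd j (fun y => L y s i) x
               - L x k s * pd i (fun y => L y s j) x).

(* given the bivector g (g x i j = g^{ij}), its inverse g_{ij} *)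
Definition lower (g : pt -> 'M[R]_N) (x : pt) : 'M[R]_N := invmx (g x).

Definition christoffel (g : pt -> 'M[R]_N) (k i j : 'I_N) (x : pt) : R :=
  2^-1 * \sum_(l < N) g x k l *
    ( pd i (fun y => lower g y l j) x + pd j (fun y => lower g y l i) x
    - pd l (fun y => lower g y i j) x).

Definition cov2 (g T : pt -> 'M[R]_N) (s k j : 'I_N) (x : pt) : R :=
  pd s (fun y => T y k j) x
  + \sum_(l < N) (christoffel g k s l x * T x l j + christoffel g j s l x * T x k l).

Definition covup2 (g T : pt -> 'M[R]_N) (i k j : 'I_N) (x : pt) : R :=
  \sum_(s < N) g x i s * cov2 g T s k j x.

Definition gtilde (L g : pt -> 'M[R]_N) (x : pt) : 'M[R]_N :=
  \matrix_(i, j) \sum_(k < N) L x j k * g x k i.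

Definition killing (g T : pt -> 'M[R]_N) (U : set pt) : Prop :=
  forall x, U x -> forall i k j : 'I_N,
    covup2 g T i k j x + covup2 g T k i j x + covup2 g T j i k x = 0.

End Defs.

Definition cspec (R : realType) (n : nat) (A : 'M[R]_n) : set (complex R) :=
  [set z : complex R | eigenvalue (map_mx (real_complex R) A) z].

(* Write K for tilde g. Expanding the Christoffel symbols and using that the Levi-Civita
   connection preserves g, the Killing equation becomes
     g^{is} d_s K^{kj} + g^{ks} d_s K^{ij} + g^{js} d_s K^{ik}
       = d_l g^{ik} K^{lj} + d_l g^{ij} K^{lk} + d_l g^{kj} K^{il}.
   Take i = u^t and k, j = v^c, v^d. The block form of g and K kills every mixed term,
   leaving sigma^{tt'} d_{t'} eta~^{cd} = d_{t'} eta^{cd} sigma~^{tt'}. As B does not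
   depend on u, d_{t'} eta~^{cd} = B^d_e d_{t'} eta^{ec}, while sigma~^{tt'} =
   A^{t'}_s sigma^{st}. Cancelling the invertible sigma, the matrix X_{et} = d_{u^t} eta^{ec}
   (c fixed) satisfies X A = B X, so X = 0 because A and B have no common eigenvalue
   (Sylvester); then also d_u eta~ = 0. The claim for sigma is the same argument with u and
   v exchanged. *)

From HB Require Import structures.
From mathcomp Require Import all_boot all_order all_algebra.
From mathcomp Require Import all_classical all_reals all_analysis.
From mathcomp Require Import complex ring.
Import Order.TTheory GRing.Theory Num.Theory.
Import numFieldNormedType.Exports.
Local Open Scope classical_set_scope.
Local Open Scope ring_scope.

Lemma mulmx_horner_mx_intertwine {F : comNzRingType} {m p}
    {A : 'M[F]_m.+1} {B : 'M[F]_p.+1} {X : 'M[F]_(p.+1, m.+1)} (q : {poly F}) :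
  X *m A = B *m X -> X *m horner_mx A q = horner_mx B q *m X.
Proof.
move=> XA; elim/poly_ind: q => [|q c IH]; first by rewrite !rmorph0 mulmx0 mul0mx.
rewrite !rmorphD !rmorphM /= !horner_mx_X !horner_mx_C mulmxDr mulmxDl.
by rewrite mul_mx_scalar mul_scalar_mx -!mulmxE mulmxA IH -!mulmxA XA.
Qed.

Lemma noneigenvalue_unitmx {F : fieldType} {n} {B : 'M[F]_n} {z} :
  ~~ eigenvalue B z -> B - z%:M \in unitmx.
Proof.
move=> Bz; rewrite unitmxE unitfE; apply: contra Bz => /det0P [v v0 vB].
by apply/eigenvalueP; exists v => //; apply/eqP; rewrite -subr_eq0 -mul_mx_scalar -mulmxBr vB.
Qed.

(* [char_poly A] evaluated at [B] annihilates [X] by Cayley-Hamilton, yet it is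
   invertible because it factors into the [B - z%:M] with [z] eigenvalues of [A]. *)
Lemma sylvester_closed {F : closedFieldType} {m p}
    {A : 'M[F]_m.+1} {B : 'M[F]_p.+1} {X : 'M[F]_(p.+1, m.+1)} :
  (forall z, eigenvalue A z -> ~~ eigenvalue B z) -> X *m A = B *m X -> X = 0.
Proof.
move=> dis /(mulmx_horner_mx_intertwine (char_poly A)).
rewrite Cayley_Hamilton mulmx0 => /esym XB0.
have [r def_chA] := closed_field_poly_normal (char_poly A).
rewrite (monicP (char_poly_monic A)) scale1r in def_chA.
have chAB : horner_mx B (char_poly A) \in unitmx.
  rewrite def_chA rmorph_prod; apply: unitr_prod_in => z zr _.
  rewrite rmorphB /= horner_mx_X horner_mx_C; apply: noneigenvalue_unitmx; apply: dis.
  by rewrite eigenvalue_root_char def_chA root_prod_XsubC.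
by rewrite -(mulKmx chAB X) XB0 mulmx0.
Qed.

Lemma sylvester_cspec {R : realType} {m p} {A : 'M[R]_m} {B : 'M[R]_p} {X : 'M[R]_(p, m)} :
  cspec A `&` cspec B = set0 -> X *m A = B *m X -> X = 0.
Proof.
case: m A X => [|m] A X; first by move=> _ _; apply/matrixP => ? [].
case: p B X => [|p] B X; first by move=> _ _; apply/matrixP => [[]].
move=> dis /(congr1 (map_mx (real_complex R))); rewrite !map_mxM => XAB.
apply: (map_mx_inj (f := real_complex R)); rewrite map_mx0.
apply: sylvester_closed XAB => z Az; apply/negP => Bz.
by have : (cspec A `&` cspec B) z by []; rewrite dis.
Qed.

Section PartialDerivatives.
Context {R : realType} {n : nat}.
Local Notation pt := 'rV[R]_n.
Implicit Types (f h : pt -> R) (x : pt) (s : 'I_n) (v : pt).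

Lemma pd_near_eq s f h x : (\forall y \near x, f y = h y) -> pd s f x = pd s h x.
Proof. exact: near_eq_derive. Qed.

Lemma pd_near_cst s f (c : R) x : (\forall y \near x, f y = c) -> pd s f x = 0.
Proof. by move=> /(pd_near_eq s) ->; exact: (derive_cst (c : R^o)). Qed.

Lemma pd_mul s f h x : derivable f x (coordv R s) -> derivable h x (coordv R s) ->
  pd s (fun y => f y * h y) x = f x * pd s h x + h x * pd s f x.
Proof. by move=> df dh; rewrite /pd (deriveM df dh). Qed.

(* [derivableM] for a product written as a lambda, so that [apply:] can match it. *)
Lemma derivable_mul f h x v : derivable f x v -> derivable h x v ->
  derivable (fun y => f y * h y) x v.
Proof. exact: derivableM. Qed.

Lemma pd_sum k s (F : 'I_k -> pt -> R) x : (forall i, derivable (F i) x (coordv R s)) ->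
  pd s (fun y => \sum_(i < k) F i y) x = \sum_(i < k) pd s (F i) x.
Proof. by move=> dF; rewrite /pd -(derive_sum dF) fct_sumE. Qed.

Lemma derivable_bigsum (I : Type) (r : seq I) (P : pred I) (F : I -> pt -> R) v x :
  (forall i, derivable (F i) x v) -> derivable (fun y => \sum_(i <- r | P i) F i y) x v.
Proof.
move=> dF; elim: r => [|a r IH].
  by under eq_fun do rewrite big_nil; exact: derivable_cst.
by under eq_fun do rewrite big_cons; case: (P a) => //; exact: derivableD.
Qed.

Lemma derivable_bigprod (I : Type) (r : seq I) (P : pred I) (F : I -> pt -> R) v x :
  (forall i, derivable (F i) x v) -> derivable (fun y => \prod_(i <- r | P i) F i y) x v.
Proof.
move=> dF; elim: r => [|a r IH].
  by under eq_fun do rewrite big_nil; exact: derivable_cst.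
by under eq_fun do rewrite big_cons; case: (P a) => //; exact: derivable_mul.
Qed.

Lemma derivable_det k (F : pt -> 'M[R]_k) x v : (forall i j, derivable (fun y => F y i j) x v) ->
  derivable (fun y => \det (F y)) x v.
Proof.
move=> dF; rewrite /determinant; apply: derivable_bigsum => s.
apply: derivable_mul; first exact: derivable_cst.
exact: derivable_bigprod.
Qed.

Section MatrixFunction.
Context {k : nat} {F : pt -> 'M[R]_k} {x : pt}.

Hypothesis F_unit : \forall y \near x, F y \in unitmx.

Lemma derivable_invmx v : (forall i j, derivable (fun y => F y i j) x v) ->
  forall i j, derivable (fun y => invmx (F y) i j) x v.
Proof.
move=> dF i j.
have adjE : \forall y \near x, (\det (F y))^-1 * \adj (F y) i j = invmx (F y) i j.
  by apply: filterS F_unit => y Fy; rewrite /invmx Fy [in RHS]mxE.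
apply: (near_eq_derivable adjE); apply: derivable_mul.
  apply: derivableV; last exact: derivable_det.
  by have := nbhs_singleton F_unit; rewrite unitmxE unitfE.
under eq_fun do rewrite mxE /cofactor.
apply: derivable_mul; first exact: derivable_cst.
by apply: derivable_det => a b; under eq_fun do rewrite !mxE; apply: dF.
Qed.

Hypothesis F_derivable : forall i j s, derivable (fun y => F y i j) x (coordv R s).

(* Differentiate [F *m invmx F = 1]. *)
Lemma pd_mx_by_invmx s a b :
  pd s (fun y => F y a b) x =
  - \sum_i \sum_j F x a i * pd s (fun y => invmx (F y) i j) x * F x j b.
Proof.
pose dF := \matrix_(i, j) pd s (fun y => F y i j) x.
pose dV := \matrix_(i, j) pd s (fun y => invmx (F y) i j) x.
have dV_der i j : derivable (fun y => invmx (F y) i j) x (coordv R s).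
  by apply: derivable_invmx => i' j'; apply: F_derivable.
have d1 : F x *m dV + dF *m invmx (F x) = 0.
  apply/matrixP => i j; rewrite !mxE -big_split /=.
  transitivity (pd s (fun y => \sum_l F y i l * invmx (F y) l j) x); last first.
    apply: (@pd_near_cst _ _ ((1%:M : 'M[R]_k) i j)); apply: filterS F_unit => y Fy.
    by rewrite -(mulmxV Fy) mxE.
  rewrite pd_sum; last by move=> l; apply: derivable_mul.
  by apply: eq_bigr => l _; rewrite pd_mul // !mxE [_ * invmx _ _ _]mulrC.
have dFE : dF = - (F x *m dV *m F x).
  apply/eqP; rewrite -addr_eq0 -[dF](mulmxKV (nbhs_singleton F_unit)).
  by rewrite -mulmxDl addrC d1 mul0mx.
transitivity (dF a b); first by rewrite mxE.
rewrite dFE !mxE; congr (- _).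
under eq_bigr do rewrite !mxE mulr_suml.
by rewrite exchange_big; apply: eq_bigr => i _; apply: eq_bigr => j _; rewrite mxE.
Qed.

End MatrixFunction.
End PartialDerivatives.

Definition christoffel_up {R : realType} {n} (g : 'rV[R]_n -> 'M[R]_n) (a c l : 'I_n)
    (x : 'rV[R]_n) : R :=
  \sum_s g x a s * christoffel g c s l x.

Section LeviCivita.
Context {R : realType} {n : nat}.
Local Notation pt := 'rV[R]_n.
Context {g : pt -> 'M[R]_n} {x : pt}.

Lemma covup2E (T : pt -> 'M[R]_n) a c d :
  covup2 g T a c d x = \sum_s g x a s * pd s (fun y => T y c d) x
    + \sum_l (christoffel_up g a c l x * T x l d + christoffel_up g a d l x * T x c l).
Proof.
rewrite /covup2; under eq_bigr do rewrite mulrDr; rewrite big_split /=; congr (_ + _).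
under eq_bigr do rewrite mulr_sumr; rewrite exchange_big /=; apply: eq_bigr => l _.
rewrite /christoffel_up !mulr_suml -big_split /=; apply: eq_bigr => s _; ring.
Qed.

Lemma christoffel_up_symE a b l :
  christoffel_up g a b l x + christoffel_up g b a l x =
  \sum_s \sum_q g x a s * g x b q *
    (2^-1 * (pd l (fun y => lower g y q s) x + pd l (fun y => lower g y s q) x)).
Proof.
rewrite /christoffel_up /christoffel.
under eq_bigr do rewrite mulr_sumr mulr_sumr.
under [X in _ + X]eq_bigr do rewrite mulr_sumr mulr_sumr.
rewrite [X in _ + X]exchange_big /= -big_split /=; apply: eq_bigr => s _.
rewrite -big_split /=; apply: eq_bigr => q _; ring.
Qed.

Context {U : set pt}.
Hypotheses (U_open : open U) (Ux : U x).
Hypothesis g_smooth : forall i j, smooth_on U (fun y => g y i j).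
Hypothesis g_nondeg : forall y, U y -> (g y)^T = g y /\ \det (g y) != 0.

Let g_near : \forall y \near x, (g y)^T = g y /\ \det (g y) != 0.
Proof. by apply: filterS (open_nbhs_nbhs (conj U_open Ux)) => y /g_nondeg. Qed.

Let g_unit : \forall y \near x, g y \in unitmx.
Proof. by apply: filterS g_near => y [_]; rewrite unitmxE unitfE. Qed.

Let g_derivable i j s : derivable (fun y => g y i j) x (coordv R s).
Proof. exact: (g_smooth i j [::]). Qed.

Let g_symx i j : g x i j = g x j i.
Proof. by rewrite -[in LHS](nbhs_singleton g_near).1 mxE. Qed.

Let pd_lower_sym l i j : pd l (fun y => lower g y i j) x = pd l (fun y => lower g y j i) x.
Proof.
apply: pd_near_eq; apply: filterS g_near => y [gy _].
by rewrite /lower -[in LHS]gy -trmx_inv mxE.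
Qed.

(* Metric compatibility of the Levi-Civita connection: nabla_l g^{ab} = 0. *)
Lemma christoffel_up_metric a b l :
  christoffel_up g a b l x + christoffel_up g b a l x = - pd l (fun y => g y a b) x.
Proof.
rewrite christoffel_up_symE (pd_mx_by_invmx g_unit g_derivable) opprK.
apply: eq_bigr => s _; apply: eq_bigr => q _.
by rewrite (pd_lower_sym l q s) (g_symx q b) /lower; field.
Qed.

Lemma killing_sumE {T : pt -> 'M[R]_n} : (T x)^T = T x -> forall i k j,
  covup2 g T i k j x + covup2 g T k i j x + covup2 g T j i k x =
  \sum_s (g x i s * pd s (fun y => T y k j) x + g x k s * pd s (fun y => T y i j) x
          + g x j s * pd s (fun y => T y i k) x)
  - \sum_l (pd l (fun y => g y i k) x * T x l j + pd l (fun y => g y i j) x * T x l k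
            + pd l (fun y => g y k j) x * T x i l).
Proof.
move=> Tsym i k j; have Tx a b : T x a b = T x b a by rewrite -[in LHS]Tsym mxE.
rewrite !covup2E -sumrN -!big_split /=; apply: eq_bigr => l _.
rewrite !opprD -!mulNr -!christoffel_up_metric (Tx k l); ring.
Qed.

End LeviCivita.

Definition offdiag {V : nmodType} {n mu nu : nat} (f : 'I_mu -> 'I_n) (h : 'I_nu -> 'I_n)
    (M : 'M[V]_n) : Prop :=
  forall t e, M (f t) (h e) = 0 /\ M (h e) (f t) = 0.

Lemma offdiag_sym {V : nmodType} {n mu nu} {f : 'I_mu -> 'I_n} {h : 'I_nu -> 'I_n}
    {M : 'M[V]_n} :
  offdiag f h M -> offdiag h f M.
Proof. by move=> Mfh e t; have [] := Mfh t e. Qed.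

Lemma offdiag_block {V : nmodType} {m p} {M : 'M[V]_(m + p)} :
  ursubmx M = 0 /\ dlsubmx M = 0 -> offdiag (@lshift m p) (@rshift m p) M.
Proof.
move=> [/matrixP ur /matrixP dl] t e.
by move: (ur t e) (dl e t); rewrite !mxE.
Qed.

(* [f] enumerates the coordinates of one block and [h] those of the other; suffixes
   such as [_fhh] record the blocks of the indices involved. *)
Section OffBlockDerivatives.
Context {R : realType} {n mu nu : nat} {f : 'I_mu -> 'I_n} {h : 'I_nu -> 'I_n}.
Local Notation pt := 'rV[R]_n.
Context {L g : pt -> 'M[R]_n} {U : set pt} {x : pt}.
Hypothesis index_split : forall F : 'I_n -> R, \sum_i F i = \sum_t F (f t) + \sum_e F (h e).
Hypotheses (U_open : open U) (Ux : U x).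
Hypothesis L_smooth : forall i j, smooth_on U (fun y => L y i j).
Hypothesis g_smooth : forall i j, smooth_on U (fun y => g y i j).
Hypothesis L_offdiag : forall y, U y -> offdiag f h (L y).
Hypothesis g_offdiag : forall y, U y -> offdiag f h (g y).
Hypothesis gt_offdiag : forall y, U y -> offdiag f h (gtilde L g y).
Hypothesis g_nondeg : forall y, U y -> (g y)^T = g y /\ \det (g y) != 0.
Hypothesis gt_sym : (gtilde L g x)^T = gtilde L g x.
Hypothesis L_hblock_const : forall t e e', pd (f t) (fun y => L y (h e) (h e')) x = 0.
Hypothesis g_fblock_unit : \matrix_(t, t') g x (f t) (f t') \in unitmx.
Hypothesis spec_disjoint : cspec (\matrix_(t, t') L x (f t) (f t'))
  `&` cspec (\matrix_(e, e') L x (h e) (h e')) = set0.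
Hypothesis g_killing : killing g (gtilde L g) U.

Local Notation G := (g x).
Local Notation K := (gtilde L g x).
Local Notation dG s i j := (pd s (fun y => g y i j) x).
Local Notation dK s i j := (pd s (fun y => gtilde L g y i j) x).

Let L_derivable i j s : derivable (fun y => L y i j) x (coordv R s).
Proof. exact: (L_smooth i j [::]). Qed.

Let g_derivable i j s : derivable (fun y => g y i j) x (coordv R s).
Proof. exact: (g_smooth i j [::]). Qed.

Let g_symx i j : G i j = G j i.
Proof. by rewrite -[in LHS](g_nondeg _ Ux).1 mxE. Qed.

Let pd_g_sym s i j : dG s i j = dG s j i.
Proof.
apply: pd_near_eq; apply: filterS (open_nbhs_nbhs (conj U_open Ux)) => y /g_nondeg [gy _].
by rewrite -[in LHS]gy mxE.
Qed.

Lemma pd_offdiag {F : pt -> 'M[R]_n} : (forall y, U y -> offdiag f h (F y)) ->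
  forall s t e, pd s (fun y => F y (f t) (h e)) x = 0 /\ pd s (fun y => F y (h e) (f t)) x = 0.
Proof.
move=> F_off s t e; have U_near := open_nbhs_nbhs (conj U_open Ux).
by split; apply: (pd_near_cst s _ 0); apply: filterS U_near => y /F_off /(_ t e) [].
Qed.

Lemma pd_gtilde s a b :
  dK s a b = \sum_k (L x b k * dG s k a + G k a * pd s (fun y => L y b k) x).
Proof.
rewrite /gtilde; under eq_fun do rewrite mxE.
by rewrite pd_sum => [|k]; [apply: eq_bigr => k _; rewrite pd_mul | apply: derivable_mul].
Qed.

Lemma killing_fhh t c d :
  \sum_s G (f t) s * dK s (h c) (h d) = \sum_l dG l (h c) (h d) * K (f t) l.
Proof.
have dG0 s e := (pd_offdiag g_offdiag s t e).1.
have dK0 s e := (pd_offdiag gt_offdiag s t e).1.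
have := g_killing x Ux (f t) (h c) (h d).
rewrite (killing_sumE U_open Ux g_smooth g_nondeg gt_sym).
rewrite [X in X - _ = _](eq_bigr (fun s => G (f t) s * dK s (h c) (h d))); last first.
  by move=> s _; rewrite !dK0 !mulr0 !addr0.
rewrite [X in _ - X = _](eq_bigr (fun l => dG l (h c) (h d) * K (f t) l)); last first.
  by move=> l _; rewrite !dG0 !mul0r !add0r.
by move/eqP; rewrite subr_eq0 => /eqP.
Qed.

Lemma pd_gtilde_fhh t c d :
  dK (f t) (h c) (h d) = \sum_e L x (h d) (h e) * dG (f t) (h e) (h c).
Proof.
rewrite pd_gtilde index_split big1 ?add0r; last first.
  by move=> t' _; rewrite (L_offdiag x Ux t' d).2 (g_offdiag x Ux t' c).1 !mul0r addr0.
by apply: eq_bigr => e _; rewrite L_hblock_const mulr0 addr0.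
Qed.

Lemma gtilde_ff t t' : K (f t) (f t') = \sum_t'' L x (f t') (f t'') * G (f t'') (f t).
Proof.
rewrite mxE index_split [X in _ + X]big1 ?addr0 // => e _.
by rewrite (L_offdiag x Ux t' e).1 mul0r.
Qed.

Local Notation sigma := (\matrix_(t, t') G (f t) (f t')).
Local Notation A := (\matrix_(t, t') L x (f t) (f t')).
Local Notation B := (\matrix_(e, e') L x (h e) (h e')).
Local Notation dGc c := (\matrix_(e, t) dG (f t) (h e) (h c)).

Lemma killing_fblock c : sigma *m (B *m dGc c)^T = sigma *m (dGc c *m A)^T.
Proof.
apply/matrixP => t e; rewrite !mxE.
have := killing_fhh t c e.
rewrite index_split [X in _ + X = _]big1 ?addr0; last first.
  by move=> e' _; rewrite (g_offdiag x Ux t e').1 mul0r.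
rewrite index_split [X in _ = _ + X]big1 ?addr0; last first.
  by move=> e' _; rewrite (gt_offdiag x Ux t e').1 mulr0.
move=> E; transitivity (\sum_t' G (f t) (f t') * dK (f t') (h c) (h e)).
  apply: eq_bigr => t' _; rewrite pd_gtilde_fhh !mxE; congr (_ * _).
  by apply: eq_bigr => e' _; rewrite !mxE.
rewrite E; under eq_bigr do rewrite gtilde_ff mulr_sumr.
rewrite exchange_big; apply: eq_bigr => t'' _; rewrite !mxE mulr_sumr.
by apply: eq_bigr => t' _; rewrite !mxE (pd_g_sym _ (h c)) (g_symx (f t'')); ring.
Qed.

Lemma pd_g_fhh t e c : dG (f t) (h e) (h c) = 0.
Proof.
have X0 : dGc c = 0.
  apply: (sylvester_cspec spec_disjoint); apply/esym/trmx_inj.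
  by have := congr1 (mulmx (invmx sigma)) (killing_fblock c); rewrite !mulKmx.
by move/matrixP/(_ e t): X0; rewrite !mxE.
Qed.

Lemma pd_offblock_vanish t c d : dG (f t) (h c) (h d) = 0 /\ dK (f t) (h c) (h d) = 0.
Proof.
split; first exact: pd_g_fhh.
by rewrite pd_gtilde_fhh big1 // => e _; rewrite pd_g_fhh mulr0.
Qed.

End OffBlockDerivatives.

Lemma block_diag_unitmx {F : fieldType} {m p} {M : 'M[F]_(m + p)} :
  ursubmx M = 0 /\ dlsubmx M = 0 -> \det M != 0 ->
  ulsubmx M \in unitmx /\ drsubmx M \in unitmx.
Proof.
move=> [ur dl]; rewrite -[M]submxK ur dl det_ublock mulf_eq0 negb_or => /andP [a b].
by rewrite !unitmxE !unitfE block_mxKul block_mxKdr.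
Qed.

Lemma ulsubmxE {V : Type} {m p} (M : 'M[V]_(m + p)) :
  ulsubmx M = \matrix_(i, j) M (lshift p i) (lshift p j).
Proof. by apply/matrixP => i j; rewrite !mxE. Qed.

Lemma drsubmxE {V : Type} {m p} (M : 'M[V]_(m + p)) :
  drsubmx M = \matrix_(i, j) M (rshift m i) (rshift m j).
Proof. by apply/matrixP => i j; rewrite !mxE. Qed.

Lemma pd_ulsubmx {R : realType} {m p} s (F : 'rV[R]_(m + p) -> 'M[R]_(m + p)) x i j :
  pd s (fun y => ulsubmx (F y) i j) x = pd s (fun y => F y (lshift p i) (lshift p j)) x.
Proof. by under eq_fun do rewrite !mxE. Qed.

Lemma pd_drsubmx {R : realType} {m p} s (F : 'rV[R]_(m + p) -> 'M[R]_(m + p)) x a b :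
  pd s (fun y => drsubmx (F y) a b) x = pd s (fun y => F y (rshift m a) (rshift m b)) x.
Proof. by under eq_fun do rewrite !mxE. Qed.

Theorem lemma2 (R : realType) (m p : nat) (U : set 'rV[R]_(m + p))
  (L g : 'rV[R]_(m + p) -> 'M[R]_(m + p)) :
  open U ->
  (forall i j, smooth_on U (fun x => L x i j)) ->
  (forall i j, smooth_on U (fun x => g x i j)) ->
  (forall x, U x -> forall k i j, nijenhuis L k i j x = 0) ->
  (forall x, U x -> ursubmx (L x) = 0 /\ dlsubmx (L x) = 0) ->
  (forall x, U x -> forall (i j : 'I_m) (a : 'I_p),
      pd (rshift m a) (fun y => ulsubmx (L y) i j) x = 0) ->
  (forall x, U x -> forall (a b : 'I_p) (i : 'I_m),
      pd (lshift p i) (fun y => drsubmx (L y) a b) x = 0) ->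
  (forall x, U x -> cspec (ulsubmx (L x)) `&` cspec (drsubmx (L x)) = set0) ->
  (forall x, U x -> (g x)^T = g x /\ \det (g x) != 0) ->
  (forall x, U x -> (gtilde L g x)^T = gtilde L g x /\ \det (gtilde L g x) != 0) ->
  (forall x, U x -> ursubmx (g x) = 0 /\ dlsubmx (g x) = 0) ->
  (forall x, U x -> ursubmx (gtilde L g x) = 0 /\ dlsubmx (gtilde L g x) = 0) ->
  killing g (gtilde L g) U ->
  forall x, U x ->
    (forall (i j : 'I_m) (a : 'I_p),
        pd (rshift m a) (fun y => ulsubmx (g y) i j) x = 0 /\
        pd (rshift m a) (fun y => ulsubmx (gtilde L g y) i j) x = 0) /\
    (forall (a b : 'I_p) (i : 'I_m),
        pd (lshift p i) (fun y => drsubmx (g y) a b) x = 0 /\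
        pd (lshift p i) (fun y => drsubmx (gtilde L g y) a b) x = 0).
Proof.
move=> U_open L_smooth g_smooth _ L_blk A_u B_v spec g_nd gt_nd g_blk gt_blk g_kil x Ux.
have [u_unit v_unit] := block_diag_unitmx (g_blk x Ux) (g_nd x Ux).2.
rewrite ulsubmxE drsubmxE in u_unit v_unit.
have spec_x := spec x Ux; rewrite ulsubmxE drsubmxE in spec_x.
have L_off y Uy := offdiag_block (L_blk y Uy).
have g_off y Uy := offdiag_block (g_blk y Uy).
have gt_off y Uy := offdiag_block (gt_blk y Uy).
have gt_sym := (gt_nd x Ux).1.
split=> [i j a | a b i]; rewrite ?pd_ulsubmx ?pd_drsubmx.
- have split_vu (F : 'I_(m + p) -> R) :
      \sum_(k < m + p) F k = \sum_a F (rshift m a) + \sum_i F (lshift p i).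
    by rewrite big_split_ord addrC.
  have Lu_const a' i' j' : pd (rshift m a') (fun y => L y (lshift p i') (lshift p j')) x = 0.
    by rewrite -pd_ulsubmx A_u.
  exact: (pd_offblock_vanish split_vu U_open Ux L_smooth g_smooth
    (fun y Uy => offdiag_sym (L_off y Uy)) (fun y Uy => offdiag_sym (g_off y Uy))
    (fun y Uy => offdiag_sym (gt_off y Uy)) g_nd gt_sym Lu_const v_unit
    (eq_trans (setIC _ _) spec_x) g_kil).
- have split_uv (F : 'I_(m + p) -> R) :
      \sum_(k < m + p) F k = \sum_i F (lshift p i) + \sum_a F (rshift m a).
    by rewrite big_split_ord.
  have Lv_const i' a' b' : pd (lshift p i') (fun y => L y (rshift m a') (rshift m b')) x = 0.
    by rewrite -pd_drsubmx B_v.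
  exact: (pd_offblock_vanish split_uv U_open Ux L_smooth g_smooth
    L_off g_off gt_off g_nd gt_sym Lv_const u_unit spec_x g_kil).
Qed.
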